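(* Let $\mathcal{T},\mathcal{U},\mathcal{B}$ be tile sets with mutually consistent frequencies such that $\mathcal{B}$ consists only of exact tiles and $\mathrm{area}(\mathcal{T})\cap\mathrm{area}(\mathcal{U})\subseteq\mathrm{area}(\mathcal{B})$. Then $d(\mathcal{T},\mathcal{U};\mathcal{B})=1$.
   Context: Fix $n,m\ge1$; $\mathcal{D}$ is the set of $n\times m$ binary matrices. A tile is $T=(t(T),a(T))$ with nonempty $t(T)\subseteq\{1..n\}$, $a(T)\subseteq\{1..m\}$, $\mathrm{area}(T)=t(T)\times a(T)$, $\mathrm{area}(\mathcal{T})=\bigcup_{T\in\mathcal{T}}\mathrm{area}(T)$. $\mathrm{fr}(T;D)=\frac1{|\mathrm{area}(T)|}\sum_{(i,j)\in\mathrm{area}(T)}D(i,j)$, $\mathrm{fr}(T;p)=\sum_Dp(D)\mathrm{fr}(T;D)$. Each tile carries a target frequency $\alpha_T$; tile sets are consistent if some distribution on $\mathcal{D}$ attains all target frequencies simultaneously. For a tile set $\mathcal{T}$, $p^*_{\mathcal{T}}$ is the entropy-maximising distribution among those with $\mathrm{fr}(T;p)=\alpha_T$ for all $T\in\mathcal{T}$. $\mathrm{KL}(\mathcal{T}\|\mathcal{U})=\mathrm{KL}(p^*_{\mathcal{T}}\|p^*_{\mathcal{U}})$. A tile is exact if its frequency is $0$ or $1$. With $\mathcal{M}=\mathcal{T}\cup\mathcal{U}\cup\mathcal{B}$, $d(\mathcal{T},\mathcal{U};\mathcal{B})=\frac{\mathrm{KL}(\mathcal{M}\|\mathcal{U}\cup\mathcal{B})+\mathrm{KL}(\mathcal{M}\|\mathcal{T}\cup\mathcal{B})}{\mathrm{KL}(\mathcal{M}\|\mathcal{B})}$,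 defined as $1$ if $\mathrm{KL}(\mathcal{M}\|\mathcal{B})=0$. *)

From mathcomp Require Import all_boot.
From Stdlib Require Import Reals ClassicalEpsilon.

Set Implicit Arguments.
Unset Strict Implicit.
Unset Printing Implicit Defensive.

Section TileDefs.

Variables n m : nat.

Definition bmat := {ffun 'I_n * 'I_m -> bool}.

Record tile := Tile { trows : {set 'I_n}; tcols : {set 'I_m}; talpha : R }.

Definition valid_tile (T : tile) : Prop :=
  trows T != set0 /\ tcols T != set0.

(* A tile set; union of tile sets is concatenation. *)
Definition tileset := seq tile.

Definition rsum (I : finType) (P : pred I) (F : I -> R) : R :=
  \big[Rplus/R0]_(i in P) F i.

Definition area_size (T : tile) : R := INR (#|trows T| * #|tcols T|).

Definition fr (T : tile) (D : bmat) : R :=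
  Rdiv (rsum (mem (trows T)) (fun i =>
          rsum (mem (tcols T)) (fun j => if D (i, j) then R1 else R0)))
       (area_size T).

Definition is_distr (p : bmat -> R) : Prop :=
  (forall D, Rle R0 (p D)) /\ rsum predT p = R1.

Definition fr_p (T : tile) (p : bmat -> R) : R :=
  rsum predT (fun D => Rmult (p D) (fr T D)).

Definition feasible (Ts : tileset) (p : bmat -> R) : Prop :=
  is_distr p /\ forall T, List.In T Ts -> fr_p T p = talpha T.

Definition consistent (Ts : tileset) : Prop := exists p, feasible Ts p.

Definition xlnx (x : R) : R :=
  if Rlt_dec R0 x then Rmult x (ln x) else R0.

Definition entropy (p : bmat -> R) : R := Ropp (rsum predT (fun D => xlnx (p D))).

Definition is_maxent (Ts : tileset) (p : bmat -> R) : Prop :=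
  feasible Ts p /\ forall q, feasible Ts q -> Rle (entropy q) (entropy p).

(* p*_Ts : the entropy maximiser (chosen by Hilbert's epsilon; it exists and
   is unique whenever Ts is consistent). *)
Definition pstar (Ts : tileset) : bmat -> R :=
  epsilon (inhabits (fun _ : bmat => R0)) (is_maxent Ts).

Definition KLdiv (p q : bmat -> R) : R :=
  rsum predT (fun D =>
    if Rlt_dec R0 (p D) then Rmult (p D) (ln (Rdiv (p D) (q D))) else R0).

Definition KL (Ts Us : tileset) : R := KLdiv (pstar Ts) (pstar Us).

Definition exact_tile (T : tile) : Prop := talpha T = R0 \/ talpha T = R1.

Definition in_area (Ts : tileset) (i : 'I_n) (j : 'I_m) : Prop :=
  exists T, List.In T Ts /\ i \in trows T /\ j \in tcols T.

Definition dTUB (Ts Us Bs : tileset) : R :=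
  let Ms := Ts ++ Us ++ Bs in
  if Req_EM_T (KL Ms Bs) R0 then R1
  else Rdiv (Rplus (KL Ms (Us ++ Bs)) (KL Ms (Ts ++ Bs))) (KL Ms Bs).

End TileDefs.

(* The tile constraints only see the cell marginals of a distribution, and among all
   distributions with given cell marginals the product one has the largest entropy
   (Gibbs' inequality).  So p*_S is the product of independent cells with biases mu
   maximising sum_c h(mu_c) under the (linear) tile constraints, h the binary entropy.
   If S is a part of M whose complement meets area(S) only in cells fixed by exact
   tiles of B in S, an optimal mu for M is still optimal for S on area(S), while the
   unconstrained cells outside area(S) move to 1/2.  Hence
   KL(M || S) = sum_{c not in area S} (h(1/2) - h(mu_c)).  With S = U∪B, T∪B and B,
   the hypothesis area(T) ∩ area(U) ⊆ area(B) makes the two numerator sums add up to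
   the denominator, cells outside area(M) contributing 0. *)

From Stdlib Require Import Reals Lra ClassicalEpsilon.
From Stdlib Require List.


Section XlnxContinuity.
Local Open Scope R_scope.

Lemma xlnx_pos x : 0 < x -> xlnx x = x * ln x.
Proof. intro Hx; unfold xlnx; destruct (Rlt_dec R0 x); [reflexivity | lra]. Qed.

Lemma xlnx_nonpos x : x <= 0 -> xlnx x = 0.
Proof. intro Hx; unfold xlnx; destruct (Rlt_dec R0 x); [lra | reflexivity]. Qed.

Lemma Rabs_xlnx_le_sqrt y : 0 < y < 1 -> Rabs (xlnx y) <= 2 * sqrt y.
Proof.
intros [Hy0 Hy1]; rewrite xlnx_pos by lra.
set (z := sqrt y).
assert (Hz : 0 < z) by (apply sqrt_lt_R0; lra).
assert (Hzz : z * z = y) by (apply sqrt_sqrt; lra).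
assert (Hlny : ln y = 2 * ln z) by (rewrite <- Hzz, ln_mult by lra; ring).
assert (Hlnz : - ln z <= / z - 1).
{ rewrite <- ln_Rinv by lra.
  pose proof (exp_ineq1_le (ln (/ z))) as H.
  rewrite exp_ln in H by (apply Rinv_0_lt_compat; lra); lra. }
assert (Hneg : ln y < 0) by (rewrite <- ln_1; apply ln_increasing; lra).
assert (Hzinv : z * / z = 1) by (field; lra).
rewrite Rabs_left by nra.
rewrite Hlny, <- Hzz; nra.
Qed.

Lemma continuity_pt_xlnx x : continuity_pt xlnx x.
Proof.
destruct (Rtotal_order x 0) as [Hx | [-> | Hx]].
- apply continuity_pt_locally_ext with (f := fun _ => 0) (a := - x); [lra | |].
  + intros y Hy; unfold Rdist in Hy; apply Rabs_def2 in Hy.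
    rewrite xlnx_nonpos by lra; reflexivity.
  + apply continuity_pt_const; intros a b; reflexivity.
- intros eps Heps.
  exists (Rmin 1 (eps / 2 * (eps / 2))); split; [apply Rmin_pos; nra |].
  intros y [_ Hy]; simpl in *; unfold Rdist in *.
  rewrite Rminus_0_r in Hy; rewrite (xlnx_nonpos 0), Rminus_0_r by lra.
  destruct (Rle_lt_dec y 0) as [Hy0 | Hy0].
  + rewrite xlnx_nonpos, Rabs_R0 by lra; exact Heps.
  + rewrite Rabs_right in Hy by lra.
    pose proof (Rmin_l 1 (eps / 2 * (eps / 2))); pose proof (Rmin_r 1 (eps / 2 * (eps / 2))).
    assert (Hsqrt : sqrt y < eps / 2).
    { rewrite <- (sqrt_square (eps / 2)) by lra; apply sqrt_lt_1_alt; lra. }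
    pose proof (Rabs_xlnx_le_sqrt y ltac:(lra)); lra.
- apply continuity_pt_locally_ext with (f := fun y => y * ln y) (a := x); [exact Hx | |].
  + intros y Hy; unfold Rdist in Hy; apply Rabs_def2 in Hy.
    rewrite xlnx_pos by lra; reflexivity.
  + apply continuity_pt_mult; apply derivable_continuous_pt;
      [apply derivable_pt_id | exists (/ x); apply derivable_pt_lim_ln; exact Hx].
Qed.

End XlnxContinuity.

From HB Require Import structures.
From mathcomp Require Import all_boot all_order all_algebra.
From mathcomp Require Import boolp classical_sets reals topology normedtype derive.
From mathcomp Require Import Rstruct Rstruct_topology ring lra.
Import Order.TTheory GRing.Theory Num.Theory ArrowAsProduct.

Local Open Scope ring_scope.
Bind Scope ring_scope with R.
Local Arguments xlnx _%_ring_scope.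
Local Arguments ln _%_ring_scope.

Lemma lnM x y : 0 < x -> 0 < y -> ln (x * y) = ln x + ln y.
Proof. by move=> /RltP x0 /RltP y0; rewrite ln_mult. Qed.

Lemma ln_div x y : 0 < x -> 0 < y -> ln (x / y) = ln x - ln y.
Proof.
move=> x0 y0; rewrite lnM ?invr_gt0 //; congr (_ + _).
by move/RltP: y0 => y0; rewrite -RinvE ln_Rinv.
Qed.

Lemma ln_prod (I : finType) (a : I -> R) : (forall i, 0 < a i) ->
  ln (\prod_i a i) = \sum_i ln (a i).
Proof.
move=> a0; suff [] : 0 < \prod_i a i /\ ln (\prod_i a i) = \sum_i ln (a i) by [].
elim/big_rec2: _ => [|i s p _ [p0 <-]]; first by rewrite ln_1 ltr01.
by rewrite mulr_gt0 // lnM.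
Qed.

Lemma ln_le_subr1 {x : R} : 0 < x -> ln x <= x - 1.
Proof.
move=> /RltP x0; have /RleP := exp_ineq1_le (ln x).
by rewrite exp_ln // RplusE -[IZR 1]/(GRing.one R); lra.
Qed.

Lemma ln_lt_subr1 {x : R} : 0 < x -> x != 1 -> ln x < x - 1.
Proof.
move=> /RltP x0 /eqP x1; have /RltP := exp_ineq1 (ln x) (ln_neq_0 x x1 x0).
by rewrite exp_ln // RplusE -[IZR 1]/(GRing.one R); lra.
Qed.

Definition lnz (x : R) : R := if 0 < x then ln x else 0.

Lemma xlnxE x : xlnx x = x * lnz x.
Proof.
rewrite /xlnx /lnz; case: Rlt_dec => [h | h]; first by have /RltP -> := h.
by have /RltP/negbTE -> := h; rewrite mulr0.
Qed.

Lemma xlnx0 : xlnx 0 = 0.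
Proof. by rewrite xlnxE mul0r. Qed.

Lemma xlnx_tangent_gap a s : 0 < a -> 0 < s ->
  xlnx a - a * ln s - (a - s) = a * (s / a - 1 - ln (s / a)).
Proof. by move=> a0 s0; rewrite xlnxE /lnz a0 ln_div //; field; rewrite gt_eqF. Qed.

Lemma xlnx_tangent_le {a s : R} : 0 <= a -> 0 < s -> a - s <= xlnx a - a * ln s.
Proof.
rewrite le0r => /orP [/eqP -> | a0] s0; first by rewrite xlnx0 mul0r; lra.
rewrite -subr_ge0 xlnx_tangent_gap //; apply: mulr_ge0; first exact: ltW.
by have := ln_le_subr1 (divr_gt0 s0 a0); lra.
Qed.

Lemma xlnx_tangent_lt {a s : R} : 0 <= a -> 0 < s -> a != s -> a - s < xlnx a - a * ln s.
Proof.
rewrite le0r => /orP [/eqP -> | a0] s0 as_; first by rewrite xlnx0 mul0r; lra.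
rewrite -subr_gt0 xlnx_tangent_gap //; apply: mulr_gt0 => //.
have sa1 : s / a != 1.
  by apply: contra as_ => /eqP e; apply/eqP; rewrite -(divr1_eq e).
by have := ln_lt_subr1 (divr_gt0 s0 a0) sa1; lra.
Qed.

Lemma xlnx_midpoint_lt {a b : R} : 0 <= a -> 0 <= b -> a != b ->
  2 * xlnx ((a + b) / 2) < xlnx a + xlnx b.
Proof.
move=> a0 b0 ab; set s := (a + b) / 2.
have ab0 : 0 < a + b.
  by rewrite lt0r addr_ge0 // andbT paddr_eq0 //; apply: contra ab => /andP [/eqP -> /eqP ->].
have s0 : 0 < s by rewrite divr_gt0.
have as_ : a != s by apply: contra ab => /eqP e; apply/eqP; rewrite /s in e; lra.
have := xlnx_tangent_lt a0 s0 as_; have := xlnx_tangent_le b0 s0.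
have e : 2 * xlnx s = a * ln s + b * ln s by rewrite xlnxE /lnz s0 /s; field.
have : 2 * s = a + b by rewrite /s; field.
lra.
Qed.

Lemma xlnx_midpoint_le {a b : R} : 0 <= a -> 0 <= b ->
  2 * xlnx ((a + b) / 2) <= xlnx a + xlnx b.
Proof.
move=> a0 b0; have [-> | ab] := eqVneq a b; last exact/ltW/xlnx_midpoint_lt.
have -> : (b + b) / 2 = b by field.
lra.
Qed.

Definition bin_entropy (x : R) : R := - (xlnx x + xlnx (1 - x)).

Lemma bin_entropy_le_half x : 0 <= x <= 1 -> bin_entropy x <= bin_entropy 2^-1.
Proof.
move=> /andP [x0 x1]; have := @xlnx_midpoint_le x (1 - x) x0; rewrite subr_ge0 => /(_ x1).
have -> : (x + (1 - x)) / 2 = 2^-1 by field.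
have e : 1 - 2^-1 = 2^-1 :> R by field.
by rewrite /bin_entropy e; lra.
Qed.

Lemma continuous_bin_entropy : continuous bin_entropy.
Proof.
have cx : continuous xlnx by move=> x; apply/continuity_pt_cvg; exact: continuity_pt_xlnx.
move=> x; apply: (@cvgN _ R^o); apply: (@cvgD _ R^o); first exact: cx.
have c1 : {for x, continuous (fun y : R => 1 - y)}.
  by apply: (@cvgB _ R^o); [exact: cvg_cst | exact: cvg_id].
exact: (continuous_comp c1 (cx _)).
Qed.

Definition unit_box {I : Type} (mu : I -> R) := forall i, 0 <= mu i <= 1.

Lemma continuous_sum (T : topologicalType) (J : Type) (r : seq J) (P : pred J)
    (F : J -> T -> R) :
  (forall j, continuous (F j)) -> continuous (fun x => \sum_(j <- r | P j) F j x).
Proof.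
by move=> cF; apply: continuous_big => [|j _]; [exact: (@add_continuous R^o) | exact: cF].
Qed.

Lemma continuous_proj (I : eqType) (i : I) : continuous (fun mu : I -> R => mu i).
Proof. exact: (@proj_continuous I (fun=> R^o) i). Qed.

Local Open Scope classical_set_scope.

Lemma ex_max_unit_box {I : eqType} {C : set (I -> R)} {f : (I -> R) -> R} :
  C !=set0 -> closed C -> C `<=` [set mu | unit_box mu] ->
  continuous f -> exists2 mu, C mu & forall rho, C rho -> f rho <= f mu.
Proof.
move=> C0 clC Cbox cf.
have cbox : compact [set mu : I -> R | forall i, `[0, 1]%classic (mu i)].
  exact: tychonoff (fun=> @segment_compact R 0 1).
have cC : compact C.
  apply: subclosed_compact clC cbox _ => mu /Cbox box i /=.
  by rewrite in_itv /=; exact: box.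
have [mu Cmu mumax] := compact_EVT_max C0 cC (continuous_subspaceT cf).
by exists mu => [|rho Crho]; [rewrite inE in Cmu | apply: mumax; rewrite inE].
Qed.

Lemma closed_unit_box (I : eqType) : closed [set mu : I -> R | unit_box mu].
Proof.
have -> : [set mu : I -> R | unit_box mu] = \bigcap_i [set mu | mu i \in `[0, 1]%R].
  apply/seteqP; split=> mu /= h i => [_|]; rewrite /= ?in_itv; first exact: h.
  by have := h i Logic.I; rewrite /= in_itv.
apply: closed_bigI => i _.
have := @preimage_closed _ R^o (fun mu : I -> R => mu i) [set x : R^o | x \in `[0, 1]%R].
by apply; [move=> mu _; exact: continuous_proj | exact: interval_closed].
Qed.

Local Close Scope classical_set_scope.

Lemma sum_notin_andb {I : finType} {b s1 s2 : pred I} {g : I -> R} :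
  (forall i, b i = s1 i && s2 i) -> (forall i, ~~ s1 i -> ~~ s2 i -> g i = 0) ->
  \sum_(i | ~~ s1 i) g i + \sum_(i | ~~ s2 i) g i = \sum_(i | ~~ b i) g i.
Proof.
move=> bE g0; rewrite [X in X + _]big_mkcond [X in _ + X]big_mkcond [RHS]big_mkcond.
rewrite -big_split; apply: eq_bigr => i _; rewrite bE; move: (g0 i).
by case: (s1 i) (s2 i) => [] [] /= g0i; rewrite ?addr0 ?add0r // g0i ?addr0.
Qed.

Lemma sumr_if_split (I : finType) (A : pred I) (h : R -> R) (x y : I -> R) :
  \sum_i h (if A i then x i else y i) = \sum_(i | A i) h (x i) + \sum_(i | ~~ A i) h (y i).
Proof.
by rewrite (bigID A) /=; congr (_ + _); apply: eq_bigr => i; [move=> -> | move/negbTE ->].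
Qed.

Lemma In_cat {A : Type} (x : A) (s1 s2 : seq A) :
  List.In x (s1 ++ s2) <-> List.In x s1 \/ List.In x s2.
Proof. exact: List.in_app_iff. Qed.

Section ProductDistribution.
Context {I : finType}.
Local Notation conf := {ffun I -> bool}.
Implicit Types (mu : I -> R) (q : conf -> R) (D : conf).

Definition bern mu i (b : bool) : R := if b then mu i else 1 - mu i.
Definition prod_distr mu D : R := \prod_i bern mu i (D i).
Definition marginal q i : R := \sum_(D : conf | D i) q D.
Definition fill_half (A : pred I) mu i : R := if A i then mu i else 2^-1.

Lemma bern_ge0 mu i b : unit_box mu -> 0 <= bern mu i b.
Proof. by move=> box; rewrite /bern; case: b; have := box i; lra. Qed.

Lemma prodr_gt0_factor (a : I -> R) i :
  (forall j, 0 <= a j) -> 0 < \prod_j a j -> 0 < a i.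
Proof.
move=> a0 p0; rewrite lt0r a0 andbT; apply: contraTneq p0 => ai0.
by rewrite (bigD1 i) //= ai0 mul0r ltxx.
Qed.

Lemma xlnx_prod (a : I -> R) : (forall i, 0 <= a i) ->
  xlnx (\prod_i a i) = \prod_i a i * \sum_i lnz (a i).
Proof.
move=> a0; have [p0 | p_le0] := ltrP 0 (\prod_i a i); last first.
  have -> : \prod_i a i = 0 by apply/le_anti; rewrite p_le0 prodr_ge0.
  by rewrite xlnx0 mul0r.
have ai0 i : 0 < a i := prodr_gt0_factor a i a0 p0.
rewrite xlnxE /lnz p0 ln_prod //; congr (_ * _).
by apply: eq_bigr => i _; rewrite ai0.
Qed.

Lemma sum_prod_ffun (G : I -> bool -> R) :
  \sum_(D : conf) \prod_i G i (D i) = \prod_i (G i true + G i false).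
Proof. by rewrite -bigA_distr_bigA; apply: eq_bigr => i _; rewrite big_bool. Qed.

Lemma expect_prod_distr_coord mu i (phi : bool -> R) :
  \sum_(D : conf) prod_distr mu D * phi (D i) = mu i * phi true + (1 - mu i) * phi false.
Proof.
transitivity (\sum_(D : conf) \prod_j (bern mu j (D j) * (if j == i then phi (D j) else 1))).
  apply: eq_bigr => D _; rewrite big_split /=; congr (_ * _).
  by rewrite (bigD1 i) //= eqxx big1 ?mulr1 // => j /negbTE ->.
rewrite (sum_prod_ffun (fun j b => bern mu j b * (if j == i then phi b else 1))).
rewrite (bigD1 i) //= eqxx big1 ?mulr1 // => j /negbTE ->.
by rewrite /bern !mulr1; lra.
Qed.

Lemma prod_distr_sum1 mu : \sum_(D : conf) prod_distr mu D = 1.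
Proof. by rewrite sum_prod_ffun big1 // => i _; rewrite /bern; lra. Qed.

Lemma prod_distr_ge0 mu D : unit_box mu -> 0 <= prod_distr mu D.
Proof. by move=> box; apply: prodr_ge0 => i _; exact: bern_ge0. Qed.

Lemma marginal_compl q i : \sum_(D : conf) q D = 1 -> 1 - marginal q i = \sum_(D : conf | ~~ D i) q D.
Proof. by move=> q1; rewrite -q1 (bigID (fun D : conf => D i)) /= /marginal; lra. Qed.

Lemma expect_coord q i (phi : bool -> R) : \sum_(D : conf) q D = 1 ->
  \sum_(D : conf) q D * phi (D i) = marginal q i * phi true + (1 - marginal q i) * phi false.
Proof.
move=> q1; rewrite marginal_compl // (bigID (fun D : conf => D i)) /= /marginal !big_distrl /=.
by congr (_ + _); apply: eq_bigr => D; [move=> -> | move/negbTE ->].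
Qed.

Lemma marginal_prod_distr mu i : marginal (prod_distr mu) i = mu i.
Proof.
have := expect_coord (prod_distr mu) i (fun b => if b then 1 else 0) (prod_distr_sum1 mu).
by rewrite (expect_prod_distr_coord mu i (fun b => if b then 1 else 0)); lra.
Qed.

Lemma marginal_unit_box q :
  (forall D, 0 <= q D) -> \sum_(D : conf) q D = 1 -> unit_box (marginal q).
Proof.
move=> q0 q1 i; rewrite sumr_ge0 //=.
have := marginal_compl q i q1; have : 0 <= \sum_(D : conf | ~~ D i) q D by apply: sumr_ge0.
lra.
Qed.

Lemma le_bern_marginal q D i : (forall D, 0 <= q D) -> \sum_(D : conf) q D = 1 ->
  q D <= bern (marginal q) i (D i).
Proof.
move=> q0 q1; rewrite /bern; case: ifP => Di; last rewrite marginal_compl //.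
all: by rewrite /marginal (bigD1 D) ?Di //= lerDl; apply: sumr_ge0.
Qed.

Lemma cross_entropy_prod_distr q mu : \sum_(D : conf) q D = 1 ->
  \sum_(D : conf) q D * \sum_i lnz (bern mu i (D i)) =
  \sum_i (marginal q i * lnz (mu i) + (1 - marginal q i) * lnz (1 - mu i)).
Proof.
move=> q1; under eq_bigr do rewrite big_distrr /=.
by rewrite exchange_big; apply: eq_bigr => i _; rewrite (expect_coord q i (fun b => lnz (bern mu i b))).
Qed.

Lemma entropy_prod_distr mu : unit_box mu ->
  - \sum_(D : conf) xlnx (prod_distr mu D) = \sum_i bin_entropy (mu i).
Proof.
move=> box.
rewrite (eq_bigr (fun D => prod_distr mu D * \sum_i lnz (bern mu i (D i)))) => [|D _].
  rewrite cross_entropy_prod_distr ?prod_distr_sum1 // -sumrN.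
  by apply: eq_bigr => i _; rewrite marginal_prod_distr /bin_entropy !xlnxE.
by apply: xlnx_prod => i; exact: bern_ge0.
Qed.

Lemma entropy_le_marginals q : (forall D, 0 <= q D) -> \sum_(D : conf) q D = 1 ->
  - \sum_(D : conf) xlnx (q D) <= \sum_i bin_entropy (marginal q i).
Proof.
move=> q0 q1; set nu := marginal q.
have tangent D : q D * \sum_i lnz (bern nu i (D i)) - xlnx (q D) <= prod_distr nu D - q D.
  have [qD0 | ] := ltrP 0 (q D); last first.
    move=> qD_le0; have -> : q D = 0 by apply/le_anti; rewrite qD_le0 q0.
    by rewrite xlnx0 mul0r !subr0; apply/prod_distr_ge0/marginal_unit_box.
  have bern_gt0 i : 0 < bern nu i (D i) := lt_le_trans qD0 (le_bern_marginal q D i q0 q1).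
  have p0 : 0 < prod_distr nu D by apply: prodr_gt0.
  have -> : \sum_i lnz (bern nu i (D i)) = ln (prod_distr nu D).
    by rewrite ln_prod //; apply: eq_bigr => i _; rewrite /lnz bern_gt0.
  by have := xlnx_tangent_le (q0 D) p0; lra.
have : \sum_(D : conf) (q D * \sum_i lnz (bern nu i (D i)) - xlnx (q D)) <=
        \sum_(D : conf) (prod_distr nu D - q D).
  by apply: ler_sum => D _; exact: tangent.
rewrite !sumrB cross_entropy_prod_distr // prod_distr_sum1 q1 subrr.
have -> : \sum_i (nu i * lnz (nu i) + (1 - nu i) * lnz (1 - nu i)) =
          - \sum_i bin_entropy (nu i).
  by rewrite -sumrN; apply: eq_bigr => i _; rewrite /bin_entropy opprK !xlnxE.
lra.
Qed.

Lemma fill_half_unit_box (A : pred I) mu : unit_box mu -> unit_box (fill_half A mu).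
Proof. by move=> box i; rewrite /fill_half; case: (A i); [exact: box | lra]. Qed.

Lemma relative_entropy_fill_half (A : pred I) mu : unit_box mu ->
  \sum_(D : conf) (if 0 < prod_distr mu D then
      prod_distr mu D * ln (prod_distr mu D / prod_distr (fill_half A mu) D) else 0) =
  \sum_(i | ~~ A i) (bin_entropy 2^-1 - bin_entropy (mu i)).
Proof.
move=> box; set nu := fill_half A mu.
transitivity (\sum_(D : conf) prod_distr mu D *
    \sum_i (lnz (bern mu i (D i)) - lnz (bern nu i (D i)))).
  apply: eq_bigr => D _; case: ifP => [p0 | /negbT]; last first.
    rewrite -leNgt => p_le0; have -> : prod_distr mu D = 0.
      by apply/le_anti; rewrite p_le0 prod_distr_ge0.
    by rewrite mul0r.
  have mu_gt0 i : 0 < bern mu i (D i).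
    by apply: prodr_gt0_factor p0 => j; exact: bern_ge0.
  have nu_gt0 i : 0 < bern nu i (D i).
    by rewrite /nu /bern /fill_half; case: (A i); [exact: mu_gt0 | case: (D i); lra].
  rewrite ln_div ?prodr_gt0 // /prod_distr !ln_prod // sumrB.
  by congr (_ * (_ - _)); apply: eq_bigr => i _; rewrite /lnz ?mu_gt0 ?nu_gt0.
under eq_bigr do rewrite sumrB mulrBr.
rewrite sumrB !cross_entropy_prod_distr ?prod_distr_sum1 // -sumrB (bigID A) /=.
rewrite big1 ?add0r => [|i Ai]; last by rewrite /nu /fill_half Ai subrr.
apply: eq_bigr => i /negbTE nAi; rewrite marginal_prod_distr /nu /fill_half nAi.
have half : 1 - 2^-1 = 2^-1 :> R by field.
by rewrite /bin_entropy !xlnxE half; field.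
Qed.

End ProductDistribution.

Section Tiles.
Context {n m : nat}.
Local Notation cell := ('I_n * 'I_m)%type.
Local Notation bm := (bmat n m).
Implicit Types (S M B : tileset n m) (T : tile n m) (mu rho : cell -> R) (p q : bm -> R).

Lemma is_distrE q : is_distr q <-> (forall D, 0 <= q D) /\ \sum_(D : bm) q D = 1.
Proof. by split=> -[q0 q1]; split=> // D; apply/RleP. Qed.

Lemma fr_pE T q : fr_p T q = \sum_(D : bm) q D * fr T D.
Proof. by []. Qed.

Lemma entropyE q : entropy q = - \sum_(D : bm) xlnx (q D).
Proof. by []. Qed.

Lemma KLdivE p q :
  KLdiv p q = \sum_(D : bm) (if 0 < p D then p D * ln (p D / q D) else 0).
Proof.
apply: eq_bigr => D _; case: Rlt_dec => h; first by have /RltP -> := h.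
by have /RltP/negbTE -> := h.
Qed.

Definition fr_marg T mu : R :=
  (\sum_(i in trows T) \sum_(j in tcols T) mu (i, j)) / area_size T.

Lemma fr_p_marginal T q : fr_p T q = fr_marg T (marginal q).
Proof.
rewrite fr_pE /fr_marg; under eq_bigr do rewrite /fr mulrA.
rewrite -big_distrl /=; congr (_ / _).
under eq_bigr do rewrite big_distrr /=.
rewrite exchange_big /=; apply: eq_bigr => i _.
under eq_bigr do rewrite big_distrr /=.
rewrite exchange_big /=; apply: eq_big => // j _.
rewrite /marginal [RHS]big_mkcond (eq_bigr (fun D : bm => if D (i, j) then q D else 0)) // => D _.
by case: ifP; rewrite ?mulr1 ?mulr0.
Qed.

Definition marg_feasible S mu :=
  unit_box mu /\ forall T, List.In T S -> fr_marg T mu = talpha T.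

Definition marg_maxent S mu := marg_feasible S mu /\
  forall rho, marg_feasible S rho -> \sum_c bin_entropy (rho c) <= \sum_c bin_entropy (mu c).

Lemma feasible_marginal S q : feasible S q -> marg_feasible S (marginal q).
Proof.
case=> /is_distrE [q0 q1] hS; split; first exact: marginal_unit_box.
by move=> T hT; rewrite -fr_p_marginal hS.
Qed.

Lemma feasible_prod_distr S mu : marg_feasible S mu -> feasible S (prod_distr mu).
Proof.
case=> box hS; split.
  by apply/is_distrE; split=> [D|]; [exact: prod_distr_ge0 | exact: prod_distr_sum1].
move=> T hT; rewrite fr_p_marginal -(hS T hT); congr fr_marg.
by apply: funext => c; exact: marginal_prod_distr.
Qed.

Lemma maxent_prod_distr S mu : marg_maxent S mu -> is_maxent S (prod_distr mu).
Proof.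
case=> hmu hmax; split; first exact: feasible_prod_distr.
move=> q hq; apply/RleP; rewrite !entropyE entropy_prod_distr; last exact: hmu.1.
have [/is_distrE [q0 q1] _] := hq.
by apply: le_trans (entropy_le_marginals q q0 q1) _; exact/hmax/feasible_marginal.
Qed.

Lemma feasible_midpoint S p p' : feasible S p -> feasible S p' ->
  feasible S (fun D => (p D + p' D) / 2).
Proof.
case=> /is_distrE [p0 p1] hp [/is_distrE [p'0 p'1] hp']; split.
  apply/is_distrE; split=> [D|]; first by rewrite divr_ge0 ?addr_ge0.
  by rewrite -mulr_suml big_split /= p1 p'1; field.
move=> T hT; rewrite fr_pE.
under eq_bigr do rewrite mulrAC mulrDl.
by rewrite -mulr_suml big_split /= -!fr_pE hp // hp' //; field.
Qed.

Lemma maxent_unique S p p' : is_maxent S p -> is_maxent S p' -> p = p'.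
Proof.
move=> [hp pmax] [hp' p'max]; apply: funext => D0; apply/eqP; apply: contraT => neq.
have /RleP := pmax _ (feasible_midpoint S p p' hp hp').
have /RleP := pmax p' hp'; have /RleP := p'max p hp.
have [[/is_distrE [p0 _] _] [/is_distrE [p'0 _] _]] := (hp, hp').
have : \sum_(D : bm) 2 * xlnx ((p D + p' D) / 2) < \sum_(D : bm) (xlnx (p D) + xlnx (p' D)).
  rewrite (bigD1 D0) //= [X in _ < X](bigD1 D0) //=.
  apply: ltr_leD; first exact: xlnx_midpoint_lt.
  by apply: ler_sum => D _; exact: xlnx_midpoint_le.
by rewrite -mulr_sumr big_split /= !entropyE; lra.
Qed.

Lemma pstar_prod_distr {S mu} : marg_maxent S mu -> pstar S = prod_distr mu.
Proof.
move=> hmu; have hmax := maxent_prod_distr S mu hmu.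
exact: maxent_unique (epsilon_spec _ _ (ex_intro _ _ hmax)) hmax.
Qed.

Lemma continuous_fr_marg T : continuous (fr_marg T).
Proof.
have cs : continuous (fun mu : cell -> R => \sum_(i in trows T) \sum_(j in tcols T) mu (i, j)).
  by do 2!apply: continuous_sum => ?; exact: continuous_proj.
by move=> mu; exact: cvgMr_tmp (cs mu).
Qed.

Local Open Scope classical_set_scope.

Lemma ex_marg_maxent S : (exists mu, marg_feasible S mu) -> exists mu, marg_maxent S mu.
Proof.
case=> mu0 h0.
have closedC : closed [set mu | marg_feasible S mu].
  apply: closedI; first exact: closed_unit_box.
  apply: closed_bigI => T _.
  have := @preimage_closed _ R^o (fr_marg T) [set x : R^o | x = talpha T].
  by apply; [move=> mu _; exact: continuous_fr_marg | exact: closed_eq].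
have cH : continuous (fun mu : cell -> R => \sum_c bin_entropy (mu c)).
  apply: continuous_sum => c mu; apply: continuous_comp; last exact: continuous_bin_entropy.
  exact: continuous_proj.
have [mu hmu mumax] := ex_max_unit_box (ex_intro _ mu0 h0) closedC (fun mu h => h.1) cH.
by exists mu; split.
Qed.

Local Close Scope classical_set_scope.

Lemma area_size_gt0 T : valid_tile T -> 0 < area_size T.
Proof. by case=> r0 c0; rewrite /area_size INRE ltr0n muln_gt0 !card_gt0 r0 c0. Qed.

Lemma area_sizeE T : area_size T = \sum_(i in trows T) \sum_(j in tcols T) 1.
Proof.
rewrite /area_size INRE natrM; under eq_bigr do rewrite sumr_const.
by rewrite sumr_const mulr_natl.
Qed.

Lemma exact_tile_forced {S T mu i j} :
  marg_feasible S mu -> List.In T S -> valid_tile T -> exact_tile T ->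
  i \in trows T -> j \in tcols T -> mu (i, j) = talpha T.
Proof.
case=> box hS hT vT eT hi hj; set a := talpha T.
have a01 : a = 0 \/ a = 1 := eT.
have a_ne_half : 1 - 2 * a != 0.
  by case: a01 => ->; [apply: lt0r_neq0 | apply: ltr0_neq0]; lra.
have e0 c : 0 <= (mu c - a) * (1 - 2 * a) by case: a01 => ->; have := box c; nra.
have hsum : \sum_(i in trows T) \sum_(j in tcols T) mu (i, j) = a * area_size T.
  by rewrite /a -(hS T hT) /fr_marg divfK // gt_eqF // area_size_gt0.
have es : \sum_(i in trows T) \sum_(j in tcols T) (mu (i, j) - a) * (1 - 2 * a) = 0.
  under eq_bigr do rewrite -big_distrl sumrB /=.
  rewrite -big_distrl sumrB hsum area_sizeE mulr_sumr /=.
  under eq_bigr do rewrite mulr_sumr.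
  by under eq_bigr do under eq_bigr do rewrite mulr1; rewrite subrr mul0r.
have row0 i' : 0 <= \sum_(j in tcols T) (mu (i', j) - a) * (1 - 2 * a).
  by apply: sumr_ge0 => j' _; exact: e0.
have /eqP := psumr_eq0P (fun j' _ => e0 (i, j')) (psumr_eq0P (fun i' _ => row0 i') es hi) hj.
by rewrite mulf_eq0 (negbTE a_ne_half) orbF subr_eq0 => /eqP.
Qed.

Definition areab S (c : cell) : bool :=
  has (fun T => (c.1 \in trows T) && (c.2 \in tcols T)) S.

Lemma areabP S i j : reflect (in_area S i j) (areab S (i, j)).
Proof.
apply: (iffP idP).
  elim: S => //= T S IH /orP [/andP [hi hj] | /IH [T' [hT' hT'ij]]].
    by exists T; split; [left | split].
  by exists T'; split; [right | ].
case=> T [hT [hi hj]]; elim: S hT => //= T' S IH [-> | /IH ->]; last exact: orbT.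
by rewrite hi hj.
Qed.

Lemma tile_areab {S T i j} : List.In T S -> i \in trows T -> j \in tcols T -> areab S (i, j).
Proof. by move=> hT hi hj; apply/areabP; exists T. Qed.

Lemma areab_cat S1 S2 c : areab (S1 ++ S2) c = areab S1 c || areab S2 c.
Proof. exact: has_cat. Qed.

Lemma fr_marg_eq_on T mu rho :
  (forall i j, i \in trows T -> j \in tcols T -> mu (i, j) = rho (i, j)) ->
  fr_marg T mu = fr_marg T rho.
Proof.
by move=> h; congr (_ / _); apply: eq_bigr => i hi; apply: eq_bigr => j hj; exact: h.
Qed.

Lemma marg_feasible_fill_half M S mu :
  marg_feasible M mu -> List.incl S M -> marg_feasible S (fill_half (areab S) mu).
Proof.
case=> box hM SM; split; first exact: fill_half_unit_box.
move=> T hT; rewrite -(hM T (SM T hT)); apply: fr_marg_eq_on => i j hi hj.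
by rewrite /fill_half (tile_areab hT hi hj).
Qed.

Section Restriction.
Context {M S E B : tileset n m}.
Hypotheses (SM : List.incl S M) (MSE : List.incl M (S ++ E)) (BS : List.incl B S).
Hypothesis hB : forall T, List.In T B -> valid_tile T /\ exact_tile T.
Hypothesis ESB : forall c, areab E c -> areab S c -> areab B c.

(* A cell of area(S) lying in a tile outside S is in an exact tile of B, which fixes
   its value for [rho] and [mu] alike. *)
Lemma marg_feasible_glue {mu rho} : marg_feasible M mu -> marg_feasible S rho ->
  marg_feasible M (fun c => if areab S c then rho c else mu c).
Proof.
move=> hmu hrho; split.
  by move=> c; case: (areab S c); [exact: hrho.1 | exact: hmu.1].
move=> T hT; have [TS | TE] := proj1 (In_cat _ _ _) (MSE T hT).
  rewrite -(hrho.2 T TS); apply: fr_marg_eq_on => i j hi hj.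
  by rewrite (tile_areab TS hi hj).
rewrite -(hmu.2 T hT); apply: fr_marg_eq_on => i j hi hj.
case: ifP => // /(ESB _ (tile_areab TE hi hj)) /areabP [Tb [hTb [hib hjb]]].
have [vTb eTb] := hB Tb hTb.
rewrite (exact_tile_forced hrho (BS Tb hTb) vTb eTb hib hjb).
by rewrite (exact_tile_forced hmu (SM Tb (BS Tb hTb)) vTb eTb hib hjb).
Qed.

Lemma marg_maxent_restrict {mu} :
  marg_maxent M mu -> marg_maxent S (fill_half (areab S) mu).
Proof.
case=> hmu mumax; split; first exact: marg_feasible_fill_half hmu SM.
move=> rho hrho; have := mumax _ (marg_feasible_glue hmu hrho).
rewrite (sumr_if_split _ _ bin_entropy) [X in _ <= X](bigID (areab S)) /= => hglue.
rewrite /fill_half (sumr_if_split _ _ bin_entropy) (bigID (areab S)) /=.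
have : \sum_(c | ~~ areab S c) bin_entropy (rho c) <= \sum_(c | ~~ areab S c) bin_entropy 2^-1.
  by apply: ler_sum => c _; apply: bin_entropy_le_half; exact: hrho.1.
lra.
Qed.

Lemma KL_marg_maxent {mu} : marg_maxent M mu ->
  KL M S = \sum_(c | ~~ areab S c) (bin_entropy 2^-1 - bin_entropy (mu c)).
Proof.
move=> hmu; rewrite /KL (pstar_prod_distr hmu) (pstar_prod_distr (marg_maxent_restrict hmu)).
by rewrite KLdivE relative_entropy_fill_half //; exact: hmu.1.1.
Qed.

End Restriction.

Lemma ex_marg_maxent_half M : (exists mu, marg_feasible M mu) ->
  exists mu, marg_maxent M mu /\ forall c, ~~ areab M c -> mu c = 2^-1.
Proof.
move=> /ex_marg_maxent [mu hmu]; exists (fill_half (areab M) mu); split.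
  apply: (marg_maxent_restrict (E := [::]) (B := [::])) hmu => //.
  by move=> T; rewrite In_cat; left.
by move=> c /negbTE; rewrite /fill_half => ->.
Qed.

End Tiles.

Theorem theorem7 (n m : nat) (Hn : (0 < n)%N) (Hm : (0 < m)%N)
  (Ts Us Bs : tileset n m)
  (Hvalid : forall T, List.In T (Ts ++ Us ++ Bs) -> valid_tile T)
  (Hcons : consistent (Ts ++ Us ++ Bs))
  (Hexact : forall T, List.In T Bs -> exact_tile T)
  (Harea : forall i j, in_area Ts i j -> in_area Us i j -> in_area Bs i j) :
  dTUB Ts Us Bs = R1.
Proof.
pose M := Ts ++ Us ++ Bs.
have hB T : List.In T Bs -> valid_tile T /\ exact_tile T.
  by move=> hT; split; [apply: Hvalid; rewrite !In_cat; tauto | exact: Hexact].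
have [p /feasible_marginal hM] := Hcons.
have [mu [hmu mu_half]] := ex_marg_maxent_half M (ex_intro _ _ hM).
pose g c := bin_entropy 2^-1 - bin_entropy (mu c).
have KL_cover S E : List.incl S M -> List.incl M (S ++ E) -> List.incl Bs S ->
    (forall c, areab E c -> areab S c -> areab Bs c) ->
    KL M S = \sum_(c | ~~ areab S c) g c.
  by move=> SM MSE BS ESB; exact (KL_marg_maxent SM MSE BS hB ESB hmu).
have hTU c : areab Ts c && areab Us c ==> areab Bs c.
  by case: c => i j; apply/implyP => /andP [/areabP hT /areabP hU]; apply/areabP/Harea.
have bE c : areab Bs c = areab (Us ++ Bs) c && areab (Ts ++ Bs) c.
  by rewrite !areab_cat; move: (hTU c); case: (areab Ts c) (areab Us c) (areab Bs c) => [] [] [].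
have g0 c : ~~ areab (Us ++ Bs) c -> ~~ areab (Ts ++ Bs) c -> g c = 0.
  move=> hU hT; rewrite /g mu_half ?subrr //; move: hU hT.
  by rewrite /M !areab_cat; case: (areab Ts c) (areab Us c) (areab Bs c) => [] [] [].
have hsum : \sum_(c | ~~ areab (Us ++ Bs) c) g c + \sum_(c | ~~ areab (Ts ++ Bs) c) g c =
            \sum_(c | ~~ areab Bs c) g c := sum_notin_andb bE g0.
rewrite /dTUB -/M (KL_cover (Us ++ Bs) Ts) ?(KL_cover (Ts ++ Bs) Us) ?(KL_cover Bs (Ts ++ Us)).
all: try by move=> T; rewrite ?In_cat; tauto.
all: try by move=> c; rewrite !areab_cat; move: (hTU c);
  case: (areab Ts c) (areab Us c) (areab Bs c) => [] [] [].
by case: Req_dec_T => //= KB0; rewrite RdivE RplusE hsum divff //; exact/eqP.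
Qed.
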